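(* For every choice of environment function $Env()$, ESAdapt under the reward function $Rew_{CodeB}()$ is unsolvable: there is no algorithm (Turing machine), regardless of running time or memory, that produces the correct output for every instance.
   Context: Model. Let $X=\{x_1,\dots,x_{|X|}\}$ be Boolean variables and $O$ a finite output set. Software system requirements are a finite set $R$ of pairs $(i,o)$, where $i$ is a truth assignment to $X$ and $o\in O$. Interfaces and components follow the Dana runtime component model: an interface is a set of function prototypes (function name, return type, parameter types) together with a set of typed transfer fields; a component provides one or more interfaces and requires zero or more interfaces, and contains code (in a Dana-like imperative language with assignments, conditionals, loops, arrays, function calls and an output statement; this language can simulate any Turing machine) implementing every function of its provided interfaces; this code may call functions and use transfer fields of its required interfaces. $L_{int}$ and $L_{comp}$ are finite libraries of interfaces and components. Given a base component $c\in L_{comp}$ implementing a function main, a valid component-based software system $S$ based on $c$ is obtained by choosing, for each required interface of $c$, a component of $L_{comp}$ providing it, and recursively for each required interface of every chosen component; separate copies of a component are used for separate required-interface occurrences, and when a component providing several interfaces implements one of them, only a reduced copy containing that interface's code is used. Its component wiring tree has root $c$, vertices the chosen component copies, arcs labelled by the implemented interfaces; no component label may occur twice on a root-to-leaf path. $S$ is working relative to $R$ if for every $(i,o)\in R$, running $S$ on input $i$ outputs $o$. An environment function $Env()$ maps a system to events/metric values and is computable in polynomial time. $Rew_{CodeB}(S)$ is the total number of lines of code in the interfaces and components comprising $S$. Problem ESAdapt under $Rew_{CodeB}()$: Input: $R$, $L_{int}$, $L_{comp}$, a working system $S$ based on a component $c\in L_{comp}$ relative to $R$, $L_{int}$, $L_{comp}$,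 and $Env()$. Output: a working system $S'$ based on $c$ relative to $L_{int},L_{comp},R$ having the smallest value of $Rew_{CodeB}(S')$ over all working systems based on $c$ relative to $L_{int},L_{comp},R$. *)

From HB Require Import structures.
From mathcomp Require Import all_boot.

Set Implicit Arguments.
Unset Strict Implicit.
Unset Printing Implicit Defensive.

(*  1. The Dana-like component programming language                          *)

(* Values are natural numbers; variables, function names, interface        *)
(* identifiers, transfer-field names and type codes are natural numbers.    *)

Inductive binop := BAdd | BSub | BMul | BDiv | BMod | BEq | BLt.

Inductive expr :=
| ENum of nat
| EVar of nat
| EIn of nat                       (* value (0/1) of input variable x_(k+1) *)
| ETF of option nat & nat          (* transfer field f of the provided
                                      interface (None) or of the k-th
                                      required interface (Some k)           *)
| EBin of binop & expr & expr.

Inductive stmt :=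
| SSkip
| SAssign of nat & expr
| SSeq of stmt & stmt
| SIf of expr & stmt & stmt                  (* if e <> 0 then s1 else s2   *)
| SWhile of expr & stmt                      (* while e <> 0 do s           *)
| SCall of nat & nat & nat & seq nat         (* x := req_k.f(y1,...,ym)     *)
| SReturn of expr
| SSetTF of option nat & nat & expr
| SOutput of expr.                           (* output e (ends the run)     *)

(* An interface: function prototypes (name, return type, parameter types)  *)
(* and typed transfer fields (type, name).                                  *)
Record iface := Iface {
  i_protos : seq (nat * nat * seq nat);
  i_fields : seq (nat * nat) }.

Record fdef := FDef {
  d_iface : nat;
  d_name : nat;
  d_params : seq nat;
  d_body : stmt }.

(* A component: provided interfaces, required interfaces (indices into the *)
(* interface library), and code.                                            *)
Record comp := Comp {
  c_provides : seq nat;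
  c_requires : seq nat;
  c_code : seq fdef }.

(* Component wiring trees: a vertex is labelled by (the index in L_comp of) *)
(* a component; its children correspond, in order, to its required          *)
(* interfaces.                                                              *)
Inductive wtree := WNode of nat & seq wtree.

Definition binop_code b :=
  match b with BAdd => 0 | BSub => 1 | BMul => 2 | BDiv => 3 | BMod => 4
             | BEq => 5 | BLt => 6 end.
Definition binop_decode n :=
  match n with 0 => Some BAdd | 1 => Some BSub | 2 => Some BMul
             | 3 => Some BDiv | 4 => Some BMod | 5 => Some BEq | 6 => Some BLt
             | _ => None end.
Lemma binop_codeK : pcancel binop_code binop_decode. Proof. by case. Qed.
HB.instance Definition _ := Countable.copy binop (pcan_type binop_codeK).

Fixpoint expr_enc (e : expr) : GenTree.tree (seq nat) :=
  match e with
  | ENum n => GenTree.Node 0 [:: GenTree.Leaf [:: n]]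
  | EVar v => GenTree.Node 1 [:: GenTree.Leaf [:: v]]
  | EIn k => GenTree.Node 2 [:: GenTree.Leaf [:: k]]
  | ETF None f => GenTree.Node 3 [:: GenTree.Leaf [:: f]]
  | ETF (Some k) f => GenTree.Node 4 [:: GenTree.Leaf [:: k; f]]
  | EBin b e1 e2 =>
      GenTree.Node 5 [:: GenTree.Leaf [:: binop_code b]; expr_enc e1; expr_enc e2]
  end.

Fixpoint expr_dec (t : GenTree.tree (seq nat)) : option expr :=
  match t with
  | GenTree.Node 0 [:: GenTree.Leaf [:: n]] => Some (ENum n)
  | GenTree.Node 1 [:: GenTree.Leaf [:: v]] => Some (EVar v)
  | GenTree.Node 2 [:: GenTree.Leaf [:: k]] => Some (EIn k)
  | GenTree.Node 3 [:: GenTree.Leaf [:: f]] => Some (ETF None f)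
  | GenTree.Node 4 [:: GenTree.Leaf [:: k; f]] => Some (ETF (Some k) f)
  | GenTree.Node 5 [:: GenTree.Leaf [:: c]; t1; t2] =>
      match binop_decode c, expr_dec t1, expr_dec t2 with
      | Some b, Some e1, Some e2 => Some (EBin b e1 e2)
      | _, _, _ => None
      end
  | _ => None
  end.

Lemma expr_encK : pcancel expr_enc expr_dec.
Proof.
by elim=> //= [[k|] f|b e1 IH1 e2 IH2] //; rewrite binop_codeK IH1 IH2.
Qed.
HB.instance Definition _ := Countable.copy expr (pcan_type expr_encK).

Fixpoint stmt_enc (s : stmt) : GenTree.tree (seq nat) :=
  match s with
  | SSkip => GenTree.Node 0 [::]
  | SAssign x e => GenTree.Node 1 [:: GenTree.Leaf [:: x]; expr_enc e]
  | SSeq s1 s2 => GenTree.Node 2 [:: stmt_enc s1; stmt_enc s2]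
  | SIf e s1 s2 => GenTree.Node 3 [:: expr_enc e; stmt_enc s1; stmt_enc s2]
  | SWhile e s1 => GenTree.Node 4 [:: expr_enc e; stmt_enc s1]
  | SCall x k f args =>
      GenTree.Node 5 [:: GenTree.Leaf [:: x; k; f]; GenTree.Leaf args]
  | SReturn e => GenTree.Node 6 [:: expr_enc e]
  | SSetTF None f e => GenTree.Node 7 [:: GenTree.Leaf [:: f]; expr_enc e]
  | SSetTF (Some k) f e =>
      GenTree.Node 8 [:: GenTree.Leaf [:: k; f]; expr_enc e]
  | SOutput e => GenTree.Node 9 [:: expr_enc e]
  end.

Fixpoint stmt_dec (t : GenTree.tree (seq nat)) : option stmt :=
  match t with
  | GenTree.Node 0 [::] => Some SSkip
  | GenTree.Node 1 [:: GenTree.Leaf [:: x]; te] =>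
      omap (SAssign x) (expr_dec te)
  | GenTree.Node 2 [:: t1; t2] =>
      match stmt_dec t1, stmt_dec t2 with
      | Some s1, Some s2 => Some (SSeq s1 s2) | _, _ => None end
  | GenTree.Node 3 [:: te; t1; t2] =>
      match expr_dec te, stmt_dec t1, stmt_dec t2 with
      | Some e, Some s1, Some s2 => Some (SIf e s1 s2) | _, _, _ => None end
  | GenTree.Node 4 [:: te; t1] =>
      match expr_dec te, stmt_dec t1 with
      | Some e, Some s1 => Some (SWhile e s1) | _, _ => None end
  | GenTree.Node 5 [:: GenTree.Leaf [:: x; k; f]; GenTree.Leaf args] =>
      Some (SCall x k f args)
  | GenTree.Node 6 [:: te] => omap SReturn (expr_dec te)
  | GenTree.Node 7 [:: GenTree.Leaf [:: f]; te] =>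
      omap (SSetTF None f) (expr_dec te)
  | GenTree.Node 8 [:: GenTree.Leaf [:: k; f]; te] =>
      omap (SSetTF (Some k) f) (expr_dec te)
  | GenTree.Node 9 [:: te] => omap SOutput (expr_dec te)
  | _ => None
  end.

Lemma stmt_encK : pcancel stmt_enc stmt_dec.
Proof.
elim=> [|x e|s1 IH1 s2 IH2|e s1 IH1 s2 IH2|e s1 IH1|x k f a|e|[k|] f e|e] //=;
  by rewrite ?expr_encK ?IH1 ?IH2.
Qed.
HB.instance Definition _ := Countable.copy stmt (pcan_type stmt_encK).

Definition iface_enc (I : iface) := (i_protos I, i_fields I).
Definition iface_dec p := Iface p.1 p.2.
Lemma iface_encK : cancel iface_enc iface_dec. Proof. by case. Qed.
HB.instance Definition _ := Countable.copy iface (can_type iface_encK).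

Definition fdef_enc (d : fdef) := (d_iface d, d_name d, d_params d, d_body d).
Definition fdef_dec (p : nat * nat * seq nat * stmt) :=
  FDef p.1.1.1 p.1.1.2 p.1.2 p.2.
Lemma fdef_encK : cancel fdef_enc fdef_dec. Proof. by case. Qed.
HB.instance Definition _ := Countable.copy fdef (can_type fdef_encK).

Definition comp_enc (c : comp) := (c_provides c, c_requires c, c_code c).
Definition comp_dec (p : seq nat * seq nat * seq fdef) := Comp p.1.1 p.1.2 p.2.
Lemma comp_encK : cancel comp_enc comp_dec. Proof. by case. Qed.
HB.instance Definition _ := Countable.copy comp (can_type comp_encK).

Fixpoint wtree_enc (t : wtree) : GenTree.tree nat :=
  match t with WNode a ch => GenTree.Node a (map wtree_enc ch) end.
Fixpoint wtree_dec (t : GenTree.tree nat) : wtree :=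
  match t with
  | GenTree.Node a ch => WNode a (map wtree_dec ch)
  | GenTree.Leaf _ => WNode 0 [::]
  end.
Fixpoint wtree_encK (t : wtree) : wtree_dec (wtree_enc t) = t :=
  match t return wtree_dec (wtree_enc t) = t with
  | WNode a ch =>
      f_equal (WNode a)
        ((fix F (l : seq wtree) : map wtree_dec (map wtree_enc l) = l :=
            match l return map wtree_dec (map wtree_enc l) = l with
            | [::] => erefl
            | x :: l' => f_equal2 cons (wtree_encK x) (F l')
            end) ch)
  end.
HB.instance Definition _ := Countable.copy wtree (can_type wtree_encK).

(*  2. Semantics of component-based systems                                  *)

Definition dcomp : comp := Comp [::] [::] [::].
Definition diface : iface := Iface [::] [::].

Definition main_name : nat := 0.

Definition binop_eval (b : binop) (x y : nat) : nat :=
  match b with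
  | BAdd => x + y | BSub => x - y | BMul => x * y
  | BDiv => x %/ y | BMod => x %% y
  | BEq => nat_of_bool (x == y) | BLt => nat_of_bool (x < y)
  end.

(* Local variables, and transfer-field values stored per arc of the wiring *)
(* tree (an arc is identified by the path from the root to its head).      *)
Record state := State {
  st_locals : nat -> nat;
  st_tfs : seq nat -> nat -> nat }.

Definition upd (f : nat -> nat) (x v : nat) : nat -> nat :=
  fun y => if y == x then v else f y.

Definition upd_tf (g : seq nat -> nat -> nat) (a : seq nat) (f v : nat) :=
  fun a' f' => if (a' == a) && (f' == f) then v else g a' f'.

Definition arc_of (p : seq nat) (slot : option nat) : seq nat :=
  match slot with None => p | Some k => rcons p k end.

Fixpoint eval (inp : seq bool) (p : seq nat) (st : state) (e : expr) : nat :=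
  match e with
  | ENum n => n
  | EVar v => st_locals st v
  | EIn k => nat_of_bool (nth false inp k)
  | ETF s f => st_tfs st (arc_of p s) f
  | EBin b e1 e2 => binop_eval b (eval inp p st e1) (eval inp p st e2)
  end.

Fixpoint subtree (t : wtree) (p : seq nat) : option wtree :=
  match p with
  | [::] => Some t
  | k :: p' =>
      let: WNode _ ch := t in
      if k < size ch then subtree (nth (WNode 0 [::]) ch k) p' else None
  end.

Definition label (t : wtree) : nat := let: WNode a _ := t in a.

(* The definition executed when the vertex at path p calls function f of   *)
(* its k-th required interface: the code, for that interface, of the child *)
(* component copy (the reduced copy for that interface).                   *)
Definition lookup_callee (Lc : seq comp) (S : wtree) (p : seq nat) (k f : nat)
    : option fdef :=
  match subtree S p, subtree S (rcons p k) with
  | Some t, Some t' =>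
      let ca := nth dcomp Lc (label t) in
      if k < size (c_requires ca) then
        let j := nth 0 (c_requires ca) k in
        let cb := nth dcomp Lc (label t') in
        ohead [seq d <- c_code cb | (d_iface d == j) && (d_name d == f)]
      else None
  | _, _ => None
  end.

Definition bind_params (params vals : seq nat) : nat -> nat :=
  fun v => if v \in params then nth 0 vals (index v params) else 0.

Inductive outcome :=
| ONormal of state
| OReturn of nat & (seq nat -> nat -> nat)
| OHalt of nat                 (* an output statement was executed *)
| OFuel
| OErr.

(* Fuel-indexed big-step interpreter; the vertex executing is at path p.   *)
Fixpoint exec (Lc : seq comp) (S : wtree) (inp : seq bool) (fuel : nat)
    (p : seq nat) (st : state) (s : stmt) {struct fuel} : outcome :=
  match fuel with
  | 0 => OFuel
  | fuel'.+1 =>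
    match s with
    | SSkip => ONormal st
    | SAssign x e =>
        ONormal (State (upd (st_locals st) x (eval inp p st e)) (st_tfs st))
    | SSeq s1 s2 =>
        match exec Lc S inp fuel' p st s1 with
        | ONormal st' => exec Lc S inp fuel' p st' s2
        | o => o
        end
    | SIf e s1 s2 =>
        if eval inp p st e != 0 then exec Lc S inp fuel' p st s1
        else exec Lc S inp fuel' p st s2
    | SWhile e b =>
        if eval inp p st e != 0 then
          match exec Lc S inp fuel' p st b with
          | ONormal st' => exec Lc S inp fuel' p st' (SWhile e b)
          | o => o
          end
        else ONormal st
    | SCall x k f args =>
        match lookup_callee Lc S p k f with
        | None => OErr
        | Some d =>
          if size args != size (d_params d) then OErr else
          let st0 := State (bind_params (d_params d) (map (st_locals st) args))
                           (st_tfs st) in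
          match exec Lc S inp fuel' (rcons p k) st0 (d_body d) with
          | ONormal st' => ONormal (State (upd (st_locals st) x 0) (st_tfs st'))
          | OReturn r tf' => ONormal (State (upd (st_locals st) x r) tf')
          | o => o
          end
        end
    | SReturn e => OReturn (eval inp p st e) (st_tfs st)
    | SSetTF sl f e =>
        ONormal (State (st_locals st)
                       (upd_tf (st_tfs st) (arc_of p sl) f (eval inp p st e)))
    | SOutput e => OHalt (eval inp p st e)
    end
  end.

Definition sys_outputs (Lc : seq comp) (S : wtree) (inp : seq bool) (o : nat)
    : Prop :=
  match [seq d <- c_code (nth dcomp Lc (label S)) | d_name d == main_name] with
  | d :: _ =>
      exists fuel, exec Lc S inp fuel [::] (State (fun _ => 0) (fun _ _ => 0))
                        (d_body d) = OHalt o
  | [::] => False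
  end.

Definition working (Lc : seq comp) (R : seq (seq bool * nat)) (S : wtree) : Prop :=
  forall io, io \in R -> sys_outputs Lc S io.1 io.2.

(*  3. Libraries, valid systems, reward                                      *)

Definition comp_wf (Li : seq iface) (cm : comp) : bool :=
  all (fun j => j < size Li) (c_provides cm) &&
  all (fun j => j < size Li) (c_requires cm) &&
  all (fun d => d_iface d \in c_provides cm) (c_code cm) &&
  all (fun j =>
         all (fun pr => has (fun d => (d_iface d == j) && (d_name d == pr.1.1)
                                      && (size (d_params d) == size pr.2))
                            (c_code cm))
             (i_protos (nth diface Li j)))
      (c_provides cm).

Definition lib_wf (Li : seq iface) (Lc : seq comp) : bool := all (comp_wf Li) Lc.

Definition implements_main (cm : comp) : bool :=
  has (fun d => d_name d == main_name) (c_code cm).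

(* Valid wiring (sub)tree: anc = labels on the path from the root. *)
Fixpoint valid_tree (Lc : seq comp) (anc : seq nat) (t : wtree) {struct t} : bool :=
  match t with
  | WNode a ch =>
      (a < size Lc) && (a \notin anc) &&
      (fix valid_children (l : seq wtree) (rs : seq nat) {struct l} : bool :=
         match l, rs with
         | [::], [::] => true
         | t1 :: l', r :: rs' =>
             (r \in c_provides (nth dcomp Lc (label t1))) &&
             valid_tree Lc (a :: anc) t1 && valid_children l' rs'
         | _, _ => false
         end) ch (c_requires (nth dcomp Lc a))
  end.

Definition valid_system (Lc : seq comp) (c : nat) (S : wtree) : bool :=
  (label S == c) && valid_tree Lc [::] S.

Fixpoint stmt_loc (s : stmt) : nat :=
  match s with
  | SSeq s1 s2 => stmt_loc s1 + stmt_loc s2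
  | SIf _ s1 s2 => (stmt_loc s1 + stmt_loc s2).+1
  | SWhile _ s1 => (stmt_loc s1).+1
  | _ => 1
  end.

Definition fdef_loc (d : fdef) : nat := (stmt_loc (d_body d)).+1.

Definition iface_loc (I : iface) : nat := (size (i_protos I) + size (i_fields I)).+1.

Definition comp_loc (cm : comp) : nat :=
  (size (c_provides cm) + size (c_requires cm) + sumn (map fdef_loc (c_code cm))).+1.

(* reduced copy containing only the code of provided interface j *)
Definition comp_loc_red (cm : comp) (j : nat) : nat :=
  (1 + size (c_requires cm) +
   sumn (map fdef_loc [seq d <- c_code cm | d_iface d == j])).+1.

(* j = None for the root (full component c together with its provided      *)
(* interfaces), Some j for a copy implementing interface j.                 *)
Fixpoint tree_loc (Li : seq iface) (Lc : seq comp) (j : option nat) (t : wtree)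
    {struct t} : nat :=
  match t with
  | WNode a ch =>
      let cm := nth dcomp Lc a in
      match j with
      | None => comp_loc cm + sumn (map (fun j => iface_loc (nth diface Li j))
                                        (c_provides cm))
      | Some j => comp_loc_red cm j + iface_loc (nth diface Li j)
      end +
      (fix F (l : seq wtree) (rs : seq nat) {struct l} : nat :=
         match l, rs with
         | t1 :: l', r :: rs' => tree_loc Li Lc (Some r) t1 + F l' rs'
         | _, _ => 0
         end) ch (c_requires cm)
  end.

Definition Rew_CodeB (Li : seq iface) (Lc : seq comp) (S : wtree) : nat :=
  tree_loc Li Lc None S.

(*  4. The problem ESAdapt under Rew_CodeB                                   *)

(* An environment function maps systems to (event/metric) values. *)
Definition env := wtree -> nat.

(* Instances: number |X| of Boolean variables, requirements R, interface   *)
(* library, component library, base component c, current system S.        *)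
Definition instance :=
  (nat * seq (seq bool * nat) * seq iface * seq comp * nat * wtree)%type.

Definition valid_instance (n : nat) (R : seq (seq bool * nat)) (Li : seq iface)
    (Lc : seq comp) (c : nat) (S : wtree) : Prop :=
  [/\ lib_wf Li Lc, all (fun io => size io.1 == n) R,
      (c < size Lc) && implements_main (nth dcomp Lc c),
      valid_system Lc c S & working Lc R S].

Definition optimal_system (R : seq (seq bool * nat)) (Li : seq iface)
    (Lc : seq comp) (c : nat) (S' : wtree) : Prop :=
  [/\ valid_system Lc c S', working Lc R S' &
      forall S'', valid_system Lc c S'' -> working Lc R S'' ->
                  Rew_CodeB Li Lc S' <= Rew_CodeB Li Lc S''].

(*  5. Algorithms: register (counter) machines, a Turing-complete model      *)

Inductive rm_instr :=
| RInc of nat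
| RDecJz of nat & nat.

(* configuration: program counter and registers; halted when pc >= size P *)
Definition rm_step (P : seq rm_instr) (cf : nat * (nat -> nat)) :
    nat * (nat -> nat) :=
  let: (pc, regs) := cf in
  match nth (RInc 0) P pc with
  | RInc r => (pc.+1, upd regs r (regs r).+1)
  | RDecJz r l => if regs r == 0 then (l, regs)
                  else (pc.+1, upd regs r (regs r).-1)
  end.

Fixpoint rm_run (P : seq rm_instr) (fuel : nat) (cf : nat * (nat -> nat)) :
    option (nat -> nat) :=
  if size P <= cf.1 then Some cf.2 else
  match fuel with
  | 0 => None
  | fuel'.+1 => rm_run P fuel' (rm_step P cf)
  end.

(* P, started with x in register 0 (all others 0), halts with y in reg. 0 *)
Definition rm_computes (P : seq rm_instr) (x y : nat) : Prop :=
  exists fuel regs, rm_run P fuel (0, upd (fun _ => 0) 0 x) = Some regs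
                    /\ regs 0 = y.

Definition solves_ESAdapt_CodeB (Env : env) (P : seq rm_instr) : Prop :=
  forall n R Li Lc c S,
    valid_instance n R Li Lc c S ->
    exists S', optimal_system R Li Lc c S' /\
               rm_computes P (pickle ((n, R, Li, Lc, c, S) : instance))
                             (pickle S').

(* Suppose a register machine P solved ESAdapt under Rew_CodeB.  Take a main
   component calling a function f of one interface, and two leaf components
   implementing f: B returns 0 after a long stretch of dead code, while the
   shorter A rebuilds, quine-style, the Goedel number of the very instance it
   belongs to, runs P on it, and returns 1 exactly when P answers with the
   system wired to A.  Both wirings of the main component are valid, and the
   one using A has fewer lines of code.  With the requirement "empty input
   gives output 0", the system through B always works.  If P answers with the
   A-system, that system outputs 1 and does not work; otherwise it outputs 0,
   works and beats P's answer.  Either way P's answer is not optimal. *)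

From Pilot Require Import Defs.
From mathcomp Require Import all_boot zify.
From Stdlib Require Import FunctionalExtensionality.

Set Implicit Arguments.
Unset Strict Implicit.
Unset Printing Implicit Defensive.

(** * Fuel monotonicity *)

Section Fuel.
Variables (Lc : seq Defs.comp) (S : wtree) (inp : seq bool).

Lemma exec_mono f f' p st s : f <= f' -> exec Lc S inp f p st s <> OFuel ->
  exec Lc S inp f' p st s = exec Lc S inp f p st s.
Proof.
elim: f f' p st s => [|f IH] [|f'] p st s //= /IH {}IH.
case: s => //= [s1 s2|e s1 s2|e b|x k g args].
- by case E: (exec _ _ _ _ _ _ s1) => *; rewrite IH ?E //; apply: IH.
- by case: ifP => _ H; apply: IH.
- case: ifP => // _.
  by case E: (exec _ _ _ _ _ _ b) => *; rewrite IH ?E //; apply: IH.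
- case: (lookup_callee _ _ _ _ _) => // d; case: ifP => // _.
  by case E: (exec _ _ _ _ _ _ (d_body d)) => *; rewrite IH ?E.
Qed.

Lemma exec_deterministic f1 f2 p st s r1 r2 :
  exec Lc S inp f1 p st s = r1 -> exec Lc S inp f2 p st s = r2 ->
  r1 <> OFuel -> r2 <> OFuel -> r1 = r2.
Proof.
move=> <- <- H1 H2.
by rewrite -(@exec_mono f1 (maxn f1 f2)) ?leq_maxl // (@exec_mono f2) ?leq_maxr.
Qed.

Lemma exec_seq f1 f2 p st st1 s1 s2 :
  exec Lc S inp f1 p st s1 = ONormal st1 -> exec Lc S inp f2 p st1 s2 <> OFuel ->
  exec Lc S inp (maxn f1 f2).+1 p st (SSeq s1 s2) = exec Lc S inp f2 p st1 s2.
Proof.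
move=> E1 H2 /=.
by rewrite (@exec_mono f1) ?leq_maxl ?E1 // (@exec_mono f2) ?leq_maxr.
Qed.

Lemma exec_while f1 f2 p st st1 e b :
  eval inp p st e != 0 -> exec Lc S inp f1 p st b = ONormal st1 ->
  exec Lc S inp f2 p st1 (SWhile e b) <> OFuel ->
  exec Lc S inp (maxn f1 f2).+1 p st (SWhile e b) = exec Lc S inp f2 p st1 (SWhile e b).
Proof.
move=> /= -> E1 H2.
by rewrite (@exec_mono f1) ?leq_maxl ?E1 // (@exec_mono f2) ?leq_maxr.
Qed.

End Fuel.

(** * Programs acting on local variables only *)

Definition runs (s : stmt) (L L' : nat -> nat) : Prop :=
  forall Lc S inp p tf, exists fuel,
    exec Lc S inp fuel p (State L tf) s = ONormal (State L' tf).

Definition returns (L : nat -> nat) (s : stmt) (r : nat) : Prop :=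
  forall Lc S inp p tf, exists fuel, exec Lc S inp fuel p (State L tf) s = OReturn r tf.

Lemma runs_ext s L L1 L2 : runs s L L1 -> L1 =1 L2 -> runs s L L2.
Proof. by move=> H /functional_extensionality <-. Qed.

Lemma runs_seq s1 s2 L L1 L2 : runs s1 L L1 -> runs s2 L1 L2 -> runs (SSeq s1 s2) L L2.
Proof.
move=> H1 H2 Lc S inp p tf.
have [f1 E1] := H1 Lc S inp p tf; have [f2 E2] := H2 Lc S inp p tf.
by exists (maxn f1 f2).+1; rewrite (exec_seq E1) ?E2.
Qed.

Lemma runs_returns s1 s2 L L1 r : runs s1 L L1 -> returns L1 s2 r -> returns L (SSeq s1 s2) r.
Proof.
move=> H1 H2 Lc S inp p tf.
have [f1 E1] := H1 Lc S inp p tf; have [f2 E2] := H2 Lc S inp p tf.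
by exists (maxn f1 f2).+1; rewrite (exec_seq E1) E2.
Qed.

Lemma runs_assign {x e v L} :
  (forall inp p tf, eval inp p (State L tf) e = v) -> runs (SAssign x e) L (upd L x v).
Proof. by move=> He Lc S inp p tf; exists 1; rewrite /= He. Qed.

Lemma runs_if_true e s1 s2 L L' :
  (forall inp p tf, eval inp p (State L tf) e != 0) ->
  runs s1 L L' -> runs (SIf e s1 s2) L L'.
Proof.
move=> He H Lc S inp p tf; have [f E] := H Lc S inp p tf.
by exists f.+1; rewrite /= He.
Qed.

Lemma runs_if_false e s1 s2 L L' :
  (forall inp p tf, eval inp p (State L tf) e = 0) ->
  runs s2 L L' -> runs (SIf e s1 s2) L L'.
Proof.
move=> He H Lc S inp p tf; have [f E] := H Lc S inp p tf.
by exists f.+1; rewrite /= He.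
Qed.

Lemma runs_while_false e b L :
  (forall inp p tf, eval inp p (State L tf) e = 0) -> runs (SWhile e b) L L.
Proof. by move=> He Lc S inp p tf; exists 1; rewrite /= He. Qed.

Lemma runs_while_true e b L L1 L2 :
  (forall inp p tf, eval inp p (State L tf) e != 0) ->
  runs b L L1 -> runs (SWhile e b) L1 L2 -> runs (SWhile e b) L L2.
Proof.
move=> He Hb Hw Lc S inp p tf.
have [f1 E1] := Hb Lc S inp p tf; have [f2 E2] := Hw Lc S inp p tf.
by exists (maxn f1 f2).+1; rewrite (exec_while _ E1) ?E2.
Qed.

Definition double_loop (ctr x : nat) : stmt :=
  SWhile (EVar ctr) (SSeq (SAssign x (EBin BMul (EVar x) (ENum 2)))
                          (SAssign ctr (EBin BSub (EVar ctr) (ENum 1)))).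

Lemma runs_double_loop ctr x L : x != ctr ->
  runs (double_loop ctr x) L (upd (upd L ctr 0) x (L x * 2 ^ L ctr)).
Proof.
move=> /negbTE xNctr; move Ek: (L ctr) => k; elim: k L Ek => [|k IH] L Ek.
  apply: runs_ext (runs_while_false _ _) _ => [*|v]; rewrite /= ?Ek //.
  by rewrite /upd muln1; case: ifP => [/eqP-> //|_]; case: ifP => [/eqP->|].
have body : runs (SSeq (SAssign x (EBin BMul (EVar x) (ENum 2)))
                       (SAssign ctr (EBin BSub (EVar ctr) (ENum 1))))
                 L (upd (upd L x (L x * 2)) ctr k).
  apply: runs_seq (runs_assign (v := L x * 2) _) (runs_assign _) => // *.
  by rewrite /= /upd eq_sym xNctr Ek subn1.
apply: runs_while_true body _ => [*|]; first by rewrite /= Ek.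
apply: runs_ext (IH _ _) _ => [|v]; first by rewrite /upd eqxx.
rewrite /upd eqxx xNctr expnS mulnA; case: (v == x); first by rewrite mulnAC.
by case: (v == ctr).
Qed.

(** * Code terms *)

(* [ceval d (CCons a b)] is the cons step of [CodeSeq.code], so a code term
   denotes a Goedel number with one unknown number [d] plugged into its hole. *)
Inductive cterm := CHole | CNum of nat | CCons of cterm & cterm.

Fixpoint ceval (d : nat) (t : cterm) : nat :=
  match t with
  | CHole => d
  | CNum n => n
  | CCons a b => 2 ^ ceval d a * (ceval d b).*2.+1
  end.

Fixpoint csubst (t u : cterm) : cterm :=
  match t with
  | CHole => u
  | CNum n => CNum n
  | CCons a b => CCons (csubst a u) (csubst b u)
  end.

Lemma ceval_csubst d t u : ceval d (csubst t u) = ceval (ceval d u) t.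
Proof. by elim: t => //= a -> b ->. Qed.

Fixpoint cshape (t : cterm) : cterm :=
  match t with
  | CHole => CHole
  | CNum _ => CNum 0
  | CCons a b => CCons (cshape a) (cshape b)
  end.

Definition cseq (ts : seq cterm) : cterm := foldr CCons (CNum 0) ts.

Definition cpair (a b : cterm) : cterm := cseq [:: a; b].

Section Compile.
Variables (ctr hole : nat).

Fixpoint compile (x : nat) (t : cterm) : stmt :=
  match t with
  | CHole => SAssign x (EVar hole)
  | CNum n => SAssign x (ENum n)
  | CCons a b =>
      SSeq (compile x b) (SSeq (compile x.+1 a)
        (SSeq (SAssign x (EBin BAdd (EBin BMul (EVar x) (ENum 2)) (ENum 1)))
        (SSeq (SAssign ctr (EVar x.+1))
        (SSeq (double_loop ctr x) (SAssign x.+1 (ENum 0))))))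
  end.

Lemma runs_compile t x L : ctr < x -> hole < x -> L ctr = 0 ->
  (forall v, x < v -> L v = 0) ->
  runs (compile x t) L (upd L x (ceval (L hole) t)).
Proof.
elim: t x L => [|n|a IHa b IHb] x L ctr_x hole_x L_ctr L_above.
- exact: runs_assign.
- exact: runs_assign.
set vb := ceval (L hole) b; set va := ceval (L hole) a.
have ctrNx : (ctr == x) = false by apply/eqP; lia.
have holeNx : (hole == x) = false by apply/eqP; lia.
apply: runs_seq (IHb _ _ ctr_x hole_x L_ctr L_above) _.
apply: runs_seq (IHa x.+1 _ _ _ _ _) _; rewrite /upd ?ctrNx //; try lia.
  by move=> v lt_x1v; rewrite ifN_eq ?L_above //; lia.
rewrite holeNx -/va -/vb.
apply: runs_seq (runs_assign (v := vb.*2.+1) _) _.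
  by move=> *; rewrite /= ltn_eqF // eqxx; lia.
apply: runs_seq (runs_assign (v := va) _) _.
  by move=> *; rewrite /= /upd gtn_eqF // eqxx.
apply: runs_seq (runs_double_loop _ _) _; first by rewrite eq_sym ctrNx.
apply: runs_ext (runs_assign (v := 0) _) _ => // v.
rewrite /upd !eqxx (eq_sym x ctr) ctrNx -/va -/vb.
case: (v =P x.+1) => [->|_]; first by rewrite gtn_eqF ?L_above.
case: (v == x); first by rewrite mulnC.
by case: (v =P ctr) => [->|].
Qed.

Lemma stmt_loc_compile x t : stmt_loc (compile x t) = stmt_loc (compile x (cshape t)).
Proof. by elim: t x => //= a IHa b IHb x; rewrite IHa IHb. Qed.

End Compile.

Definition quotes (d : nat) (t : cterm) (T : countType) (x : T) : Prop :=
  ceval d t = pickle x.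

Section Quotes.
Variable d : nat.

Lemma quotes_pickle (T : countType) (x : T) : quotes d (CNum (pickle x)) x.
Proof. by []. Qed.

Lemma quotes_pair (T1 T2 : countType) (x : T1) (y : T2) tx ty :
  quotes d tx x -> quotes d ty y -> quotes d (cpair tx ty) (x, y).
Proof. by rewrite /quotes /= => -> ->. Qed.

Lemma quotes_cons (T : countType) (x : T) s tx ts :
  quotes d tx x -> quotes d ts s -> quotes d (CCons tx ts) (x :: s).
Proof. by rewrite /quotes /= => -> ->. Qed.

Lemma quotes_comp t (c : Defs.comp) : quotes d t (comp_enc c) -> quotes d t c.
Proof. by []. Qed.

Lemma quotes_fdef t (f : fdef) : quotes d t (fdef_enc f) -> quotes d t f.
Proof. by []. Qed.

End Quotes.

(** * Simulating register machines *)

Definition rm_instr_step (ins : rm_instr) (cf : nat * (nat -> nat)) : nat * (nat -> nat) :=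
  let: (pc, regs) := cf in
  match ins with
  | RInc r => (pc.+1, upd regs r (regs r).+1)
  | RDecJz r l => if regs r == 0 then (l, regs) else (pc.+1, upd regs r (regs r).-1)
  end.

Section Simulation.
Variables (pcv : nat) (reg : nat -> nat).
Hypotheses (reg_inj : injective reg) (reg_pcv : forall r, reg r != pcv).

Definition instr_code (i : nat) (ins : rm_instr) : stmt :=
  match ins with
  | RInc r => SSeq (SAssign (reg r) (EBin BAdd (EVar (reg r)) (ENum 1)))
                   (SAssign pcv (ENum i.+1))
  | RDecJz r l =>
      SIf (EBin BEq (EVar (reg r)) (ENum 0)) (SAssign pcv (ENum l))
          (SSeq (SAssign (reg r) (EBin BSub (EVar (reg r)) (ENum 1)))
                (SAssign pcv (ENum i.+1)))
  end.

Fixpoint dispatch (i : nat) (Q : seq rm_instr) : stmt :=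
  if Q is ins :: Q' then
    SIf (EBin BEq (EVar pcv) (ENum i)) (instr_code i ins) (dispatch i.+1 Q')
  else SSkip.

Definition simulator (P : seq rm_instr) : stmt :=
  SWhile (EBin BLt (EVar pcv) (ENum (size P))) (dispatch 0 P).

Definition represents (cf : nat * (nat -> nat)) (L : nat -> nat) : Prop :=
  L pcv = cf.1 /\ forall r, L (reg r) = cf.2 r.

Lemma runs_instr_code ins pc regs L : represents (pc, regs) L ->
  exists L', runs (instr_code pc ins) L L' /\ represents (rm_instr_step ins (pc, regs)) L'.
Proof.
have regNpcv r : (reg r == pcv) = false by apply: negbTE.
have regE r r' : (reg r' == reg r) = (r' == r) by rewrite (inj_eq reg_inj).
case=> L_pc L_reg; case: ins => [r|r l] /=.
- exists (upd (upd L (reg r) (regs r).+1) pcv pc.+1); split.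
    by apply: runs_seq (runs_assign _) (runs_assign _) => * //=; rewrite L_reg addn1.
  by split=> [|r'] /=; rewrite /upd ?eqxx // regNpcv regE; case: ifP.
case: (eqVneq (regs r) 0) => [r0|rN0].
- exists (upd L pcv l); split.
    by apply: runs_if_true (runs_assign _) => // *; rewrite /= L_reg /= r0.
  by split=> [|r'] /=; rewrite /upd ?eqxx ?regNpcv.
exists (upd (upd L (reg r) (regs r).-1) pcv pc.+1); split.
  apply: runs_if_false => [*|]; first by rewrite /= L_reg (negbTE rN0).
  by apply: runs_seq (runs_assign _) (runs_assign _) => * //=; rewrite L_reg subn1.
by split=> [|r'] /=; rewrite /upd ?eqxx // regNpcv regE; case: ifP.
Qed.

Lemma runs_dispatch Q i pc regs L : i <= pc < i + size Q -> represents (pc, regs) L ->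
  exists L', runs (dispatch i Q) L L' /\
             represents (rm_instr_step (nth (RInc 0) Q (pc - i)) (pc, regs)) L'.
Proof.
elim: Q i => [|ins Q IH] i /=.
  by rewrite addn0; case/andP=> /leq_ltn_trans le_i /le_i; rewrite ltnn.
case/andP=> le_i_pc lt_pc hrep; have L_pc := hrep.1.
case: (eqVneq pc i) hrep L_pc => [-> hrep L_pc|pcNi hrep L_pc].
  have [L' [run rep]] := runs_instr_code ins hrep.
  exists L'; split; last by rewrite subnn.
  by apply: runs_if_true run => *; rewrite /= L_pc eqxx.
have lt_i_pc : i < pc by rewrite ltn_neqAle eq_sym pcNi.
have [L' [run rep]] := IH i.+1 ltac:(by rewrite lt_i_pc addSnnS) hrep.
exists L'; split; last by rewrite -(subnSK lt_i_pc).
by apply: runs_if_false run => *; rewrite /= L_pc (negbTE pcNi).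
Qed.

Lemma runs_simulator P fuel cf regs L : rm_run P fuel cf = Some regs ->
  represents cf L -> exists L', runs (simulator P) L L' /\ forall r, L' (reg r) = regs r.
Proof.
elim: fuel cf L => [|fuel IH] [pc regs0] L /=; case: ifP => [halted [<-] hrep|running //].
1,2: exists L; split; last exact: hrep.2.
1,2: by apply: runs_while_false => *; rewrite /= hrep.1 ltnNge halted.
move=> hrun hrep.
have {}hrun : rm_run P fuel (rm_instr_step (nth (RInc 0) P pc) (pc, regs0)) = Some regs
  := hrun.
have lt_pc : pc < size P by rewrite ltnNge running.
have [L1 [run1 rep1]] := @runs_dispatch P 0 pc regs0 L ltac:(by rewrite lt_pc) hrep.
rewrite subn0 in rep1.
have [L2 [run2 regs2]] := IH _ _ hrun rep1.
exists L2; split => //.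
by apply: runs_while_true run1 run2 => *; rewrite /= hrep.1 lt_pc.
Qed.

End Simulation.

(** * A main component with two candidate leaves *)

Definition ifaces : seq iface :=
  [:: Iface [:: (main_name, 0, [::])] [::]; Iface [:: (1, 0, [::])] [::]].

Definition main_comp : Defs.comp :=
  Comp [:: 0] [:: 1] [:: FDef 0 main_name [::] (SSeq (SCall 0 0 1 [::]) (SOutput (EVar 0)))].

Definition leaf_comp (body : stmt) : Defs.comp := Comp [:: 1] [::] [:: FDef 1 1 [::] body].

Definition lib (a b : stmt) : seq Defs.comp := [:: leaf_comp a; main_comp; leaf_comp b].

Definition sysA : wtree := WNode 1 [:: WNode 0 [::]].
Definition sysB : wtree := WNode 1 [:: WNode 2 [::]].

Definition reqs : seq (seq bool * nat) := [:: ([::], 0)].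

Definition lib_instance (a b : stmt) : instance := (0, reqs, ifaces, lib a b, 1, sysB).

Lemma working1 Lc S inp o : working Lc [:: (inp, o)] S <-> sys_outputs Lc S inp o.
Proof. by split=> [/(_ _ (mem_head _ _))|out io]; last rewrite inE => /eqP ->. Qed.

Section TwoLeaves.
Variables a b : stmt.

Lemma lib_wf_lib : lib_wf ifaces (lib a b).
Proof. by []. Qed.

Lemma valid_system_sysA : valid_system (lib a b) 1 sysA.
Proof. by []. Qed.

Lemma valid_system_sysB : valid_system (lib a b) 1 sysB.
Proof. by []. Qed.

Lemma valid_system_lib S : valid_system (lib a b) 1 S -> S = sysA \/ S = sysB.
Proof.
case: S => c ch; rewrite /valid_system /= => /andP[/eqP-> /=].
case: ch => [|[k ch'] [|? ?]] //=; rewrite ?andbF //.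
by case: k => [|[|[|k]]]; case: ch' => [|? ?]; rewrite //= ?andbF //; [left|right].
Qed.

Lemma Rew_CodeB_sysA_lt : stmt_loc a < stmt_loc b ->
  Rew_CodeB ifaces (lib a b) sysA < Rew_CodeB ifaces (lib a b) sysB.
Proof. rewrite /Rew_CodeB /= /comp_loc_red /fdef_loc /=; lia. Qed.

Lemma sys_outputs_leaf S body r : nth dcomp (lib a b) (label S) = main_comp ->
  lookup_callee (lib a b) S [::] 0 1 = Some (FDef 1 1 [::] body) ->
  returns (fun _ => 0) body r ->
  forall o, sys_outputs (lib a b) S [::] o <-> o = r.
Proof.
move=> rootS callee ret o; rewrite /sys_outputs rootS /=.
have [f run] := ret (lib a b) S [::] [:: 0] (fun _ _ => 0).
have outS : exec (lib a b) S [::] (maxn f.+1 1).+1 [::] (State (fun _ => 0) (fun _ _ => 0))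
   (SSeq (SCall 0 0 1 [::]) (SOutput (EVar 0))) = OHalt r.
  by rewrite (@exec_seq _ _ _ f.+1 1 _ _ (State (upd (fun _ => 0) 0 r) (fun _ _ => 0)))
             //= callee /= run.
split=> [[f' out']|->]; last by exists (maxn f.+1 1).+1.
by have [] : OHalt o = OHalt r by apply: (exec_deterministic out' outS).
Qed.

Definition lib_cterm : cterm :=
  let fdef_t := cpair (CNum (pickle ((1, 1, [::]) : nat * nat * seq nat))) CHole in
  let leaf_t := cpair (CNum (pickle (([:: 1], [::]) : seq nat * seq nat)))
                      (CCons fdef_t (CNum (pickle ([::] : seq fdef)))) in
  cpair (cpair (cpair (CNum (pickle ((0, reqs, ifaces) : nat * _ * _)))
                      (CCons leaf_t (CNum (pickle [:: main_comp; leaf_comp b]))))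
               (CNum (pickle 1)))
        (CNum (pickle sysB)).

Lemma quotes_lib_instance : quotes (pickle a) lib_cterm (lib_instance a b).
Proof.
apply: quotes_pair; last exact: quotes_pickle.
apply: quotes_pair; last exact: quotes_pickle.
apply: quotes_pair; first exact: quotes_pickle.
apply: quotes_cons; last exact: quotes_pickle.
apply: quotes_comp; apply: quotes_pair; first exact: quotes_pickle.
apply: quotes_cons; last exact: quotes_pickle.
by apply: quotes_fdef; apply: quotes_pair; first exact: quotes_pickle.
Qed.

End TwoLeaves.

(** * The diagonal leaf *)

Definition ctr := 0.
Definition hole := 1.
Definition pcv := 2.
Definition reg (r : nat) : nat := r.+3.

Lemma code_cat s1 s2 :
  CodeSeq.code (s1 ++ s2) = foldr (fun n m => 2 ^ n * m.*2.+1) (CodeSeq.code s2) s1.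
Proof. by rewrite /CodeSeq.code foldr_cat. Qed.

Definition tail_code (C : stmt) : nat :=
  CodeSeq.code (map pickle (GenTree.encode (stmt_enc C) ++ [:: inl 0])).

(* The encoding of [hole := D; C] is a fixed prefix, in which the leaf
   [inr [:: D]] of the constant [D] occurs (the [cpair] term below), followed
   by the encoding of [C].
   Taking for [D] the Goedel number [tail_code C] of that suffix, the program
   can rebuild its own Goedel number from the value of [hole]. *)
Definition self_cterm : cterm :=
  let q x := CNum (pickle (x : nat + seq nat)) in
  foldr CCons CHole [:: q (inl 3); q (inl 2); q (inr [:: hole]); q (inl 1);
                        cpair (CNum 0) (cseq [:: cseq [:: CHole]]); q (inl 0); q (inl 0)].

Lemma ceval_self_cterm D :
  ceval D self_cterm = foldr (fun n m => 2 ^ n * m.*2.+1) D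
    [seq pickle i | i <- [:: inl 3; inl 2; inr [:: hole]; inl 1; inr [:: D]; inl 0; inl 0]].
Proof. by []. Qed.

Lemma quotes_self C :
  quotes (tail_code C) self_cterm (SSeq (SAssign hole (ENum (tail_code C))) C).
Proof.
rewrite /quotes ceval_self_cterm; set D := tail_code C; set s := SSeq _ C.
have -> : pickle s = CodeSeq.code (map pickle (GenTree.encode (stmt_enc s))) by [].
have -> : GenTree.encode (stmt_enc s) =
    [:: inl 3; inl 2; inr [:: hole]; inl 1; inr [:: D]; inl 0; inl 0]
      ++ (GenTree.encode (stmt_enc C) ++ [:: inl 0]).
  by rewrite /= cats0 -cats1.
by rewrite map_cat code_cat -/(tail_code C).
Qed.

Definition diag_cterm (b : stmt) : cterm := csubst (lib_cterm b) self_cterm.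

Definition verdict : stmt :=
  SIf (EBin BEq (EVar (reg 0)) (ENum (pickle sysA))) (SReturn (ENum 1)) (SReturn (ENum 0)).

Definition diag_tail (P : seq rm_instr) (b : stmt) : stmt :=
  SSeq (compile ctr hole (reg 0) (diag_cterm b)) (SSeq (simulator pcv reg P) verdict).

Definition diag_body (P : seq rm_instr) (b : stmt) : stmt :=
  SSeq (SAssign hole (ENum (tail_code (diag_tail P b)))) (diag_tail P b).

(* The Goedel numbers below are astronomically large: the proofs never let
   [simpl] or [done] loose on a goal where they could be evaluated. *)
Lemma stmt_loc_diag_body P b b' : stmt_loc (diag_body P b) = stmt_loc (diag_body P b').
Proof.
have cshapeE c : cshape (diag_cterm c) = cshape (diag_cterm b).
  by rewrite /diag_cterm /lib_cterm /=.
have locE c : stmt_loc (diag_body P c) =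
    1 + (stmt_loc (compile ctr hole (reg 0) (cshape (diag_cterm c))) +
         (stmt_loc (simulator pcv reg P) + stmt_loc verdict)).
  by rewrite /diag_body /diag_tail; cbn [stmt_loc]; rewrite [X in 1 + (X + _)]stmt_loc_compile.
by rewrite [LHS]locE [RHS]locE [in RHS](cshapeE b').
Qed.

Lemma quotes_diag_body P b :
  quotes (tail_code (diag_tail P b)) (diag_cterm b) (lib_instance (diag_body P b) b).
Proof.
rewrite /quotes ceval_csubst.
transitivity (ceval (pickle (diag_body P b)) (lib_cterm b)); last exact: quotes_lib_instance.
exact: (congr1 (ceval^~ (lib_cterm b)) (quotes_self (diag_tail P b))).
Qed.

Lemma diag_body_returns P b fuel regs :
  rm_run P fuel (0, upd (fun _ => 0) 0 (pickle (lib_instance (diag_body P b) b))) = Some regs ->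
  returns (fun _ => 0) (diag_body P b) (regs 0 == pickle sysA).
Proof.
move=> run; set D := tail_code (diag_tail P b); pose L0 := upd (fun _ => 0) hole D.
have reg_inj : injective reg by move=> ? ? [].
have reg_pcv r : reg r != pcv by [].
have run_compile := @runs_compile ctr hole (diag_cterm b) (reg 0) L0 isT isT erefl
  (fun v lt_v => ltac:(by rewrite /L0 /upd gtn_eqF // (ltn_trans _ lt_v))).
have rep : represents pcv reg (0, upd (fun _ => 0) 0 (pickle (lib_instance (diag_body P b) b)))
                              (upd L0 (reg 0) (ceval (L0 hole) (diag_cterm b))).
  split=> [|r]; first exact: erefl.
  rewrite -[RHS]/(upd (fun _ => 0) 0 (pickle (lib_instance (diag_body P b) b)) r).
  rewrite /upd (inj_eq reg_inj); case: (r =P 0) => [_|_]; last exact: erefl.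
  exact: quotes_diag_body.
have [L2 [run_sim L2_reg]] := runs_simulator reg_inj reg_pcv run rep.
apply: (@runs_returns _ _ _ L0); first exact: runs_assign.
apply: runs_returns run_compile _; apply: runs_returns run_sim _.
move=> Lc S inp p tf; exists 2.
by rewrite /= L2_reg; case: (regs 0 == pickle sysA).
Qed.


Definition padded_return0 (m : nat) : stmt :=
  SSeq (SReturn (ENum 0)) (iter m (SSeq SSkip) SSkip).

Lemma stmt_loc_padded_return0 m : stmt_loc (padded_return0 m) = m.+2.
Proof. by rewrite /= add1n; congr _.+1; elim: m => //= m ->. Qed.

Lemma padded_return0_returns m : returns (fun _ => 0) (padded_return0 m) 0.
Proof. by exists 2. Qed.

Theorem mainTheorem16 :
  forall Env : env, ~ exists P : seq rm_instr, solves_ESAdapt_CodeB Env P.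
Proof.
move=> Env [P solves].
pose b := padded_return0 (stmt_loc (diag_body P SSkip)); pose a := diag_body P b.
have loc_ab : stmt_loc a < stmt_loc b.
  rewrite [stmt_loc a](stmt_loc_diag_body P b SSkip) [stmt_loc b]stmt_loc_padded_return0.
  exact: leqnSn.
have outB o : sys_outputs (lib a b) sysB [::] o <-> o = 0.
  exact: (@sys_outputs_leaf a b sysB b 0 erefl erefl (padded_return0_returns _) o).
have valid : valid_instance 0 reqs ifaces (lib a b) 1 sysB.
  split; [exact: lib_wf_lib | exact: erefl | exact: erefl | exact: valid_system_sysB |].
  exact/working1/outB.
have [S' [[validS' workS' optS'] [fuel [regs [run out]]]]] := solves _ _ _ _ _ _ valid.
have outA o : sys_outputs (lib a b) sysA [::] o <-> o = (S' == sysA).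
  rewrite -(inj_eq (pcan_inj pickleK)) -out.
  exact: (@sys_outputs_leaf a b sysA a _ erefl erefl (diag_body_returns run) o).
case: (valid_system_lib validS') => eS; rewrite eS in outA workS' optS'.
  by move/working1/outA: workS'; rewrite eqxx.
have workA : working (lib a b) reqs sysA by apply/working1/outA.
by have := optS' sysA (valid_system_sysA _ _) workA; rewrite leqNgt Rew_CodeB_sysA_lt.
Qed.
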